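(* Let $m\in(0,1]$ and assume $\alpha>\frac{1}{Kh}$, $\theta>\theta_2$ and $c_2<c<c_1$. Then $G>0$, $H>0$, and the interior fixed point $E^*=(x^*,y^* )$ of the discrete map (DFP) is stable (both Jacobian eigenvalues have modulus $<1$) whenever $s<\min\{s_4,s_5\}$, where $$s_4=\Bigl(\frac{m\Gamma(m)G}{H}\Bigr)^{1/m},\qquad s_5=\Bigl(\frac{2m\Gamma(m)}{G}\Bigr)^{1/m}.$$
   Context: Fix parameters $r,K,\alpha,h,d>0$, $0<\theta<1$, $0<c<1$, a fractional order $m\in(0,1]$ and a step size $s>0$; put $S=\frac{s^m}{m\Gamma(m)}$. The discretized fractional-order system (DFP) is the map $$x_{n+1}=x_n+S\,x_n\Bigl(r\bigl(1-\tfrac{x_n}{K}\bigr)-\frac{\alpha(1-c)y_n}{1+\alpha(1-c)hx_n}\Bigr),\qquad y_{n+1}=y_n+S\,y_n\Bigl(\frac{\theta\alpha(1-c)x_n}{1+\alpha(1-c)hx_n}-d\Bigr).$$ Its interior fixed point is $E^*=(x^*,y^* )$ with $x^*=\frac{d}{\alpha(1-c)(\theta-hd)}$, $y^*=\frac{r(K-x^* )\{1+\alpha h(1-c)x^*\}}{\alpha K(1-c)}$. Define $G=\frac{rx^*}{K\theta}\bigl[\theta+hd-\alpha hK(1-c)(\theta-hd)\bigr]$, $H=\frac{rx^*(\theta-hd)}{K\theta}\bigl[\alpha K(1-c)(\theta-hd)-d\bigr]$. Thresholds: $c_1=1-\frac{d}{\alpha K(\theta-hd)}$, $c_2=1-\frac{\theta+hd}{\alpha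 Kh(\theta-hd)}$, $\theta_2=\frac{hd(\alpha Kh+1)}{\alpha Kh-1}$. *)

From Stdlib Require Import Reals Lra Arith Factorial.
Open Scope R_scope.

(* Stdlib has no Gamma function; [is_Gamma m g] says g = Gamma(m). *)
Definition gauss_seq (m : R) (n : nat) : R :=
  INR (Factorial.fact n) * Rpower (INR n) m / prod_f_R0 (fun k => m + INR k) n.

Definition is_Gamma (m g : R) : Prop := Un_cv (gauss_seq m) g.

Definition Sstep (m s g : R) : R := Rpower s m / (m * g).

Definition dfp_x (r K alpha h c S : R) (x y : R) : R :=
  x + S * x * (r * (1 - x / K) - alpha * (1 - c) * y / (1 + alpha * (1 - c) * h * x)).

Definition dfp_y (alpha h d theta c S : R) (x y : R) : R :=
  y + S * y * (theta * alpha * (1 - c) * x / (1 + alpha * (1 - c) * h * x) - d).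

Definition xstar (alpha h d theta c : R) : R :=
  d / (alpha * (1 - c) * (theta - h * d)).

Definition ystar (r K alpha h d theta c : R) : R :=
  let xs := xstar alpha h d theta c in
  r * (K - xs) * (1 + alpha * h * (1 - c) * xs) / (alpha * K * (1 - c)).

Definition Gq (r K alpha h d theta c : R) : R :=
  r * xstar alpha h d theta c / (K * theta) *
  (theta + h * d - alpha * h * K * (1 - c) * (theta - h * d)).

Definition Hq (r K alpha h d theta c : R) : R :=
  r * xstar alpha h d theta c * (theta - h * d) / (K * theta) *
  (alpha * K * (1 - c) * (theta - h * d) - d).

Definition cthr1 (K alpha h d theta : R) : R := 1 - d / (alpha * K * (theta - h * d)).
Definition cthr2 (K alpha h d theta : R) : R :=
  1 - (theta + h * d) / (alpha * K * h * (theta - h * d)).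
Definition theta2 (K alpha h d : R) : R := h * d * (alpha * K * h + 1) / (alpha * K * h - 1).

Definition is_jacobian (F1 F2 : R -> R -> R) (x0 y0 j11 j12 j21 j22 : R) : Prop :=
  derivable_pt_lim (fun u => F1 u y0) x0 j11 /\
  derivable_pt_lim (fun v => F1 x0 v) y0 j12 /\
  derivable_pt_lim (fun u => F2 u y0) x0 j21 /\
  derivable_pt_lim (fun v => F2 x0 v) y0 j22.

(* ---------- complex eigenvalues of a real 2x2 matrix ----------
   A complex number is a pair (re, im). *)
Definition cadd (z w : R * R) : R * R := (fst z + fst w, snd z + snd w).
Definition csub (z w : R * R) : R * R := (fst z - fst w, snd z - snd w).
Definition cmul (z w : R * R) : R * R :=
  (fst z * fst w - snd z * snd w, fst z * snd w + snd z * fst w).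
Definition creal (a : R) : R * R := (a, 0).
Definition cmod (z : R * R) : R := sqrt (fst z ^ 2 + snd z ^ 2).

Definition is_eigenvalue (j11 j12 j21 j22 : R) (lam : R * R) : Prop :=
  csub (cmul (csub (creal j11) lam) (csub (creal j22) lam))
       (creal (j12 * j21)) = (0, 0).

From Stdlib Require Import Reals Lra Psatz Lia Factorial.
From Coquelicot Require Import Coquelicot.
Open Scope R_scope.

(* The proof has four independent ingredients, developed in this order:
   1. Gamma(m) > 0: the Gauss product sequence is nondecreasing from n = 1 on
      and starts at 1/(m(m+1)), so its limit is positive; hence S > 0.
   2. The parameter conditions alpha > 1/(Kh), theta > theta2, c2 < c < c1
      force theta - hd > 0 together with the two strict inequalities that make
      G > 0 and H > 0.
   3. The Jacobian of the map at E* is [[1 - S G, -S d/theta], [S H theta/d, 1]],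
      so its trace is 2 - S G and its determinant 1 - S G + S^2 H.
   4. Jury's criterion: if det < 1 and |tr| < 1 + det, every (complex) root of
      the characteristic polynomial lies in the open unit disk.
   The step-size bounds s < s4 and s < s5 translate into S H < G and S G < 2,
   which are exactly Jury's conditions for the Jacobian of step 3. *)

Lemma gauss_denominator_pos (m : R) (n : nat) :
  0 < m -> 0 < prod_f_R0 (fun k => m + INR k) n.
Proof.
  intro Hm; induction n as [|n IH]; [simpl; lra|].
  change (0 < prod_f_R0 (fun k => m + INR k) n * (m + INR (S n))).
  apply Rmult_lt_0_compat; [exact IH|].
  pose proof (pos_INR (S n)); lra.
Qed.

(* Bernoulli-type bound (1 + m/(x+1)) x^m <= (x+1)^m, from ln(1+1/x) >= 1/(x+1)
   and exp u >= 1 + u; it is the ratio estimate behind monotonicity below. *)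
Lemma rpower_succ_bound (x m : R) :
  1 <= x -> 0 < m -> Rpower x m * (x + 1 + m) <= Rpower (x + 1) m * (x + 1).
Proof.
  intros Hx Hm; unfold Rpower.
  assert (Hlog : 1 / (x + 1) <= ln (x + 1) - ln x).
  { pose proof (exp_ineq1_le (ln (x / (x + 1)))) as Hexp.
    rewrite exp_ln in Hexp by (apply Rdiv_lt_0_compat; lra).
    unfold Rdiv in Hexp; rewrite ln_mult, ln_Rinv in Hexp;
      try (apply Rinv_0_lt_compat); try lra.
    assert (x * / (x + 1) = 1 - 1 / (x + 1)) by (field; lra); lra. }
  assert (Hgrow : 1 + m * (1 / (x + 1)) <= exp (m * (ln (x + 1) - ln x))).
  { eapply Rle_trans; [|apply exp_ineq1_le].
    apply Rplus_le_compat_l, Rmult_le_compat_l; lra. }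
  replace (m * ln (x + 1)) with (m * ln x + m * (ln (x + 1) - ln x)) by ring.
  rewrite exp_plus.
  replace (x + 1 + m) with ((1 + m * (1 / (x + 1))) * (x + 1)) by (field; lra).
  pose proof (exp_pos (m * ln x)).
  rewrite <- Rmult_assoc; apply Rmult_le_compat_r; [lra|].
  apply Rmult_le_compat_l; lra.
Qed.

Lemma gauss_seq_step (m : R) (n : nat) :
  0 < m -> (1 <= n)%nat -> gauss_seq m n <= gauss_seq m (S n).
Proof.
  intros Hm Hn; unfold gauss_seq.
  pose proof (gauss_denominator_pos m n Hm) as HP.
  change (prod_f_R0 (fun k => m + INR k) (S n)) with
    (prod_f_R0 (fun k => m + INR k) n * (m + INR (S n))).
  rewrite fact_simpl, mult_INR, S_INR.
  assert (Hx : 1 <= INR n) by (apply (le_INR 1); exact Hn).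
  assert (HF : 0 < INR (fact n)) by (apply lt_0_INR, lt_O_fact).
  pose proof (rpower_succ_bound (INR n) m Hx Hm) as Hratio.
  set (P := prod_f_R0 (fun k => m + INR k) n) in *.
  set (F := INR (fact n)) in *; set (x := INR n) in *.
  apply (Rmult_le_reg_r (P * (m + (x + 1)))); [nra|].
  replace ((x + 1) * F * Rpower (x + 1) m / (P * (m + (x + 1))) * (P * (m + (x + 1))))
    with (F * (Rpower (x + 1) m * (x + 1))) by (field; lra).
  replace (F * Rpower x m / P * (P * (m + (x + 1))))
    with (F * (Rpower x m * (x + 1 + m))) by (field; lra).
  apply Rmult_le_compat_l; lra.
Qed.

Lemma gauss_seq_lower_bound (m : R) (n : nat) :
  0 < m -> (1 <= n)%nat -> 1 / (m * (m + 1)) <= gauss_seq m n.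
Proof.
  intros Hm Hn; induction Hn as [|n Hn IH].
  - unfold gauss_seq; simpl; unfold Rpower.
    rewrite ln_1, Rmult_0_r, exp_0; right; field; lra.
  - eapply Rle_trans; [exact IH|]; apply gauss_seq_step; assumption.
Qed.

Lemma gamma_pos (m g : R) : 0 < m -> is_Gamma m g -> 0 < g.
Proof.
  intros Hm Hg.
  assert (Hlb : 0 < 1 / (m * (m + 1))) by (apply Rdiv_lt_0_compat; nra).
  destruct (Rlt_or_le 0 g) as [|Hle]; [assumption|exfalso].
  destruct (Hg _ Hlb) as [N HN].
  specialize (HN (S N) ltac:(lia)).
  pose proof (gauss_seq_lower_bound m (S N) Hm ltac:(lia)).
  unfold R_dist in HN; apply Rabs_def2 in HN; lra.
Qed.

Lemma Sstep_pos (m s g : R) : 0 < m -> 0 < g -> 0 < Sstep m s g.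
Proof.
  intros Hm Hg; unfold Sstep, Rpower.
  apply Rdiv_lt_0_compat; [apply exp_pos|apply Rmult_lt_0_compat; assumption].
Qed.

Lemma Sstep_bound (m s g A B : R) :
  0 < m -> 0 < g -> 0 < s -> 0 < A -> 0 < B ->
  s < Rpower (m * g * A / B) (1 / m) -> Sstep m s g * B < A.
Proof.
  intros Hm Hg Hs HA HB Hlt.
  assert (Hpos : 0 < m * g * A / B)
    by (apply Rdiv_lt_0_compat; [repeat apply Rmult_lt_0_compat|]; assumption).
  assert (Hpow : Rpower s m < m * g * A / B).
  { replace (m * g * A / B) with (Rpower (Rpower (m * g * A / B) (1 / m)) m).
    - apply Rlt_Rpower_l; lra.
    - rewrite Rpower_mult; replace (1 / m * m) with 1 by (field; lra).
      apply Rpower_1; exact Hpos. }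
  unfold Sstep; apply (Rmult_lt_reg_r (m * g / B)).
  - apply Rdiv_lt_0_compat; [apply Rmult_lt_0_compat|]; assumption.
  - replace (Rpower s m / (m * g) * B * (m * g / B)) with (Rpower s m) by (field; lra).
    replace (A * (m * g / B)) with (m * g * A / B) by (field; lra).
    exact Hpow.
Qed.

(* Complex eigenvalues p +- iq (q <> 0) have p = tr/2 and p^2 + q^2 = det;
   a real eigenvalue p with |p| >= 1 would force det >= 1 or violate the
   sign conditions 1 -+ tr + det > 0 on the characteristic polynomial. *)
Lemma jury_criterion (j11 j12 j21 j22 : R) (lam : R * R) :
  let tr := j11 + j22 in
  let det := j11 * j22 - j12 * j21 in
  det < 1 -> tr < 1 + det -> - (1 + det) < tr ->
  is_eigenvalue j11 j12 j21 j22 lam -> cmod lam < 1.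
Proof.
  intros tr det Hdet Hup Hlo Heig.
  destruct lam as [p q].
  unfold is_eigenvalue, csub, cmul, creal in Heig; simpl in Heig.
  injection Heig as Hre Him.
  assert (Hchar : p * p - tr * p + det - q * q = 0) by (unfold tr, det; nra).
  assert (Hmod : p ^ 2 + q ^ 2 < 1).
  { destruct (Req_dec q 0) as [Hq0|Hq0].
    - subst q.
      assert (Hp1 : p < 1).
      { destruct (Rlt_or_le p 1) as [|Hp]; [assumption|nra]. }
      assert (Hp2 : -1 < p).
      { destruct (Rlt_or_le (-1) p) as [|Hp]; [assumption|nra]. }
      nra.
    - assert (Hp : 2 * p = tr).
      { assert (Hprod : q * (tr - 2 * p) = 0) by (unfold tr; nra).
        apply Rmult_integral in Hprod as [|]; [contradiction|lra]. }
      nra. }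
  unfold cmod; cbn [fst snd].
  rewrite <- sqrt_1; apply sqrt_lt_1_alt; split; [nra|lra].
Qed.

Section Model.

Variables r K alpha h d theta c : R.
Hypotheses (Hr : 0 < r) (HK : 0 < K) (Halpha : 0 < alpha) (Hh : 0 < h)
  (Hd : 0 < d) (Htheta : 0 < theta) (Hc1 : c < 1).

Lemma theta_gt_hd :
  alpha > 1 / (K * h) -> theta > theta2 K alpha h d -> 0 < theta - h * d.
Proof.
  intros Halpha_gt Htheta_gt.
  assert (HKh : 1 < alpha * K * h).
  { apply (Rmult_lt_compat_r (K * h)) in Halpha_gt; [|nra].
    replace (1 / (K * h) * (K * h)) with 1 in Halpha_gt by (field; lra).
    lra. }
  unfold theta2 in Htheta_gt.
  apply (Rmult_lt_compat_r (alpha * K * h - 1)) in Htheta_gt; [|lra].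
  replace (h * d * (alpha * K * h + 1) / (alpha * K * h - 1) * (alpha * K * h - 1))
    with (h * d * (alpha * K * h + 1)) in Htheta_gt by (field; lra).
  nra.
Qed.

Hypothesis HD : 0 < theta - h * d.

Lemma below_cthr1 :
  c < cthr1 K alpha h d theta -> d < alpha * (1 - c) * K * (theta - h * d).
Proof.
  unfold cthr1; intro Hc.
  assert (Hpos : 0 < alpha * K * (theta - h * d)) by (repeat apply Rmult_lt_0_compat; lra).
  assert (Hq : d / (alpha * K * (theta - h * d)) < 1 - c) by lra.
  apply (Rmult_lt_compat_r _ _ _ Hpos) in Hq.
  replace (d / (alpha * K * (theta - h * d)) * (alpha * K * (theta - h * d)))
    with d in Hq by (field; lra).
  nra.
Qed.

Lemma above_cthr2 :
  cthr2 K alpha h d theta < c ->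
  alpha * h * K * (1 - c) * (theta - h * d) < theta + h * d.
Proof.
  unfold cthr2; intro Hc.
  assert (Hpos : 0 < alpha * K * h * (theta - h * d)) by (repeat apply Rmult_lt_0_compat; lra).
  assert (Hq : 1 - c < (theta + h * d) / (alpha * K * h * (theta - h * d))) by lra.
  apply (Rmult_lt_compat_r _ _ _ Hpos) in Hq.
  replace ((theta + h * d) / (alpha * K * h * (theta - h * d)) * (alpha * K * h * (theta - h * d)))
    with (theta + h * d) in Hq by (field; lra).
  nra.
Qed.

Lemma xstar_pos : 0 < xstar alpha h d theta c.
Proof. unfold xstar; apply Rdiv_lt_0_compat; [lra|]; apply Rmult_lt_0_compat; nra. Qed.

Lemma Gq_pos :
  cthr2 K alpha h d theta < c -> 0 < Gq r K alpha h d theta c.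
Proof.
  intro Hc; pose proof (above_cthr2 Hc); pose proof xstar_pos.
  unfold Gq; apply Rmult_lt_0_compat; [apply Rdiv_lt_0_compat|lra];
    apply Rmult_lt_0_compat; assumption.
Qed.

Lemma Hq_pos :
  c < cthr1 K alpha h d theta -> 0 < Hq r K alpha h d theta c.
Proof.
  intro Hc; pose proof (below_cthr1 Hc); pose proof xstar_pos.
  unfold Hq; apply Rmult_lt_0_compat; [apply Rdiv_lt_0_compat|lra].
  - apply Rmult_lt_0_compat; [apply Rmult_lt_0_compat|]; assumption.
  - apply Rmult_lt_0_compat; assumption.
Qed.

Lemma dfp_partials (S : R) :
  let xs := xstar alpha h d theta c in
  let ys := ystar r K alpha h d theta c in
  derivable_pt_lim (fun u => dfp_x r K alpha h c S u ys) xs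
    (1 - S * Gq r K alpha h d theta c) /\
  derivable_pt_lim (fun v => dfp_x r K alpha h c S xs v) ys (- S * d / theta) /\
  derivable_pt_lim (fun u => dfp_y alpha h d theta c S u ys) xs
    (S * Hq r K alpha h d theta c * theta / d) /\
  derivable_pt_lim (fun v => dfp_y alpha h d theta c S xs v) ys 1.
Proof.
  intros xs ys.
  assert (Hden : 1 + alpha * (1 - c) * h * xs <> 0).
  { pose proof xstar_pos as Hxs; fold xs in Hxs.
    assert (0 < alpha * (1 - c) * h * xs); [|lra].
    apply Rmult_lt_0_compat; [|exact Hxs].
    apply Rmult_lt_0_compat; [apply Rmult_lt_0_compat|]; lra. }
  repeat split; apply is_derive_Reals; unfold dfp_x, dfp_y;
    auto_derive; try exact Hden; try exact I;
    unfold Gq, Hq, ys, ystar; fold xs; unfold xs, xstar; field; repeat split; lra.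
Qed.

Lemma dfp_jacobian (S j11 j12 j21 j22 : R) :
  is_jacobian (dfp_x r K alpha h c S) (dfp_y alpha h d theta c S)
    (xstar alpha h d theta c) (ystar r K alpha h d theta c) j11 j12 j21 j22 ->
  j11 = 1 - S * Gq r K alpha h d theta c /\ j12 = - S * d / theta /\
  j21 = S * Hq r K alpha h d theta c * theta / d /\ j22 = 1.
Proof.
  intros (J11 & J12 & J21 & J22).
  destruct (dfp_partials S) as (D11 & D12 & D21 & D22).
  repeat split; eapply uniqueness_limite; eassumption.
Qed.

End Model.

Theorem theorem3p1
  (r K alpha h d theta c m s g : R)
  (Hr : 0 < r) (HK : 0 < K) (Halpha : 0 < alpha) (Hh : 0 < h) (Hd : 0 < d)
  (Htheta0 : 0 < theta) (Htheta1 : theta < 1)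
  (Hc0 : 0 < c) (Hc1 : c < 1)
  (Hm0 : 0 < m) (Hm1 : m <= 1) (Hs : 0 < s)
  (Hg : is_Gamma m g)
  (Halpha_gt : alpha > 1 / (K * h))
  (Htheta_gt : theta > theta2 K alpha h d)
  (Hc_lo : cthr2 K alpha h d theta < c) (Hc_hi : c < cthr1 K alpha h d theta) :
  let G := Gq r K alpha h d theta c in
  let H := Hq r K alpha h d theta c in
  let S := Sstep m s g in
  let s4 := Rpower (m * g * G / H) (1 / m) in
  let s5 := Rpower (2 * m * g / G) (1 / m) in
  0 < G /\ 0 < H /\
  (s < Rmin s4 s5 ->
   forall j11 j12 j21 j22 : R,
     is_jacobian (dfp_x r K alpha h c S) (dfp_y alpha h d theta c S)
       (xstar alpha h d theta c) (ystar r K alpha h d theta c)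
       j11 j12 j21 j22 ->
     forall lam : R * R, is_eigenvalue j11 j12 j21 j22 lam -> cmod lam < 1).
Proof.
  intros G H S s4 s5.
  pose proof (gamma_pos m g Hm0 Hg) as Hgp.
  assert (HD : 0 < theta - h * d) by (apply (theta_gt_hd K alpha); assumption).
  assert (HG : 0 < G) by (apply Gq_pos; assumption).
  assert (HH : 0 < H) by (apply Hq_pos; assumption).
  split; [exact HG|]; split; [exact HH|].
  intros Hsmin j11 j12 j21 j22 Hjac lam Heig.
  pose proof (Sstep_pos m s g Hm0 Hgp) as HS; fold S in HS.
  assert (HSH : S * H < G).
  { apply Sstep_bound; try assumption.
    pose proof (Rmin_l s4 s5); unfold s4 in *; lra. }
  assert (HSG : S * G < 2).
  { apply Sstep_bound; try assumption; [lra|].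
    replace (m * g * 2 / G) with (2 * m * g / G) by (unfold Rdiv; ring).
    pose proof (Rmin_r s4 s5); unfold s5 in *; lra. }
  apply dfp_jacobian in Hjac as (-> & -> & -> & ->); try assumption.
  assert (HU0 : 0 < S * (S * H)) by (apply Rmult_lt_0_compat; [|apply Rmult_lt_0_compat]; lra).
  assert (HUT : S * (S * H) < S * G) by (apply Rmult_lt_compat_l; lra).
  apply (jury_criterion (1 - S * G) (- S * d / theta) (S * H * theta / d) 1 lam);
    [| | |exact Heig];
    replace (- S * d / theta * (S * H * theta / d)) with (- (S * (S * H))) by (field; lra);
    lra.
Qed.
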